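(* Let $d\ge1$. For all $p,q\in\mathcal P_d$, if $\mathcal A(p)=\mathcal A(q)$ then $q=cp$ for some $c\in\mathbb C$ with $|c|=1$; that is, $\mathcal A(p)$ determines the equivalence class $[p]=\{cp:|c|=1\}$.
   Context: $\mathcal P_d$ is the space of complex polynomials of degree at most $d-1$ on the unit circle. Let $\omega=e^{2\pi i/(2d-1)}$, $\nu=e^{2\pi i/d}$. The map $\mathcal A:\mathcal P_d\to\mathbb R^{6d-3}$ is $(\mathcal A(p))_j=|p(\omega^j)|^2$ for $1\le j\le 2d-1$, $|p(\omega^j)-p(\omega^j\nu)|^2$ for $2d\le j\le4d-2$, and $|p(\omega^j)-ip(\omega^j\nu)|^2$ for $4d-1\le j\le 6d-3$. *)

From HB Require Import structures.
From mathcomp Require Import all_boot all_order all_algebra.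
From mathcomp Require Import reals trigo.
From mathcomp Require Export complex.
Set Implicit Arguments. Unset Strict Implicit. Unset Printing Implicit Defensive.
Import Order.TTheory GRing.Theory Num.Theory.
Local Open Scope ring_scope.
Local Open Scope complex_scope.

Definition expi (R : realType) (t : R) : R[i] := (cos t +i* sin t)%C.

Definition omega (R : realType) (d : nat) : R[i] :=
  expi ((2 * pi) / (2 * d - 1)%:R).

Definition nu (R : realType) (d : nat) : R[i] :=
  expi ((2 * pi) / d%:R).

Definition Pd (R : realType) (d : nat) (p : {poly R[i]}) : Prop :=
  (size p <= d)%N.

(* The measurement map A : P_d -> R^{6d-3}; component j (1 <= j <= 6d-3).
   Values are the squared moduli |.|^2 (real numbers, viewed inside C). *)
Definition Ameas (R : realType) (d : nat) (p : {poly R[i]}) (j : nat) : R[i] :=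
  let w := omega R d ^+ j in
  let v := nu R d in
  if (j <= 2 * d - 1)%N then `|p.[w]| ^+ 2
  else if (j <= 4 * d - 2)%N then `|(p.[w] - p.[w * v])| ^+ 2
  else `|(p.[w] - 'i * p.[w * v])| ^+ 2.

(* Let N = 2d - 1 and sample at the N-th roots of unity z = omega^j.  On the
   unit circle |p(z)|^2 = z^(1-d) p(z) p*(z), where p*(X) = X^(d-1) conj(p)(1/X)
   is again a polynomial of degree < d; hence |p|^2 - |q|^2 gives a polynomial
   of degree < N vanishing at the N sample points, and |p| = |q| on the whole
   circle.  Polarization then recovers p(z) conj(p(z nu)) from the last two
   blocks of measurements, which forces q(z) p(z nu) = q(z nu) p(z) at the
   sample points and so the polynomial identity q(X) p(nu X) = q(nu X) p(X).
   Its leading coefficients give nu^(deg p) = nu^(deg q), so deg p = deg q since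
   nu has order d; applied to q - c p with c = lc(q)/lc(p), the same argument
   shows q = c p, and |c| = 1 because |q| = |p| on the circle. *)

From HB Require Import structures.
From mathcomp Require Import all_boot all_order all_algebra.
From mathcomp Require Import reals trigo complex.
From mathcomp Require Import ring lra zify.
Import Order.TTheory GRing.Theory Num.Theory.
Local Open Scope ring_scope.

Set Implicit Arguments.
Unset Strict Implicit.
Unset Printing Implicit Defensive.

Lemma poly_eq0_of_roots (F : idomainType) (P : {poly F}) (rs : seq F) :
  uniq rs -> (size P <= size rs)%N -> all (root P) rs -> P = 0.
Proof.
move=> rs_uniq sP rootsP; apply/eqP/negPn/negP => P_neq0.
by have := max_poly_roots P_neq0 rootsP rs_uniq; rewrite ltnNge sP.
Qed.

Lemma norm_eq1_of_scale (R : numDomainType) (c : R) (p : {poly R}) (rs : seq R) :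
  uniq rs -> (size p <= size rs)%N -> p != 0 ->
  {in rs, forall z, `|(c *: p).[z]| = `|p.[z]|} -> `|c| = 1.
Proof.
move=> rs_uniq sp p_neq0 Ec; apply/eqP; apply: contraNT p_neq0 => c_neq1.
apply/eqP; apply: (poly_eq0_of_roots rs_uniq sp); apply/allP => z z_rs.
have /eqP := Ec z z_rs; rewrite hornerZ normrM -subr_eq0 -{2}[`|p.[z]|]mul1r -mulrBl.
by rewrite mulf_eq0 subr_eq0 (negPf c_neq1) normr_eq0.
Qed.

Lemma prim_root_of_order (R : nzRingType) n (z : R) :
  (0 < n)%N -> z ^+ n = 1 -> (forall k, (0 < k < n)%N -> z ^+ k != 1) ->
  n.-primitive_root z.
Proof.
move=> n_gt0 zn1 z_order; have [m prim_m m_dvd_n] := prim_order_exists n_gt0 zn1.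
have m_gt0 := prim_order_gt0 prim_m.
suff -> : n = m by [].
case: (ltngtP m n) => [lt_mn | lt_nm | -> //].
  by have := z_order m; rewrite m_gt0 lt_mn prim_expr_order // eqxx => /(_ isT).
by have := dvdn_leq n_gt0 m_dvd_n; rewrite leqNgt lt_nm.
Qed.

Lemma uniq_prim_root_powers (R : nzRingType) n (z : R) m :
  n.-primitive_root z -> uniq [seq z ^+ i | i <- iota m n].
Proof.
move=> prim_z; rewrite -[m]addn0 iotaDl -map_comp.
rewrite map_inj_in_uniq ?iota_uniq // => i j; rewrite !mem_iota /= => lt_i lt_j.
by move/eqP; rewrite (eq_prim_root_expr prim_z) eqn_modDl !modn_small // => /eqP.
Qed.

Lemma norm_unity_root (R : numDomainType) n (z : R) :
  (0 < n)%N -> z ^+ n = 1 -> `|z| = 1.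
Proof.
by move=> n_gt0 zn1; apply/eqP; rewrite -(pexpr_eq1 n_gt0) // -normrX zn1 normr1.
Qed.

Section Rotation.
Variables (F : fieldType) (n : nat) (v : F).
Hypothesis prim_v : n.-primitive_root v.

Local Notation rot p := (p \Po (v *: 'X)).

Lemma prim_root_neq0 : v != 0.
Proof.
apply/eqP => v0; move: (prim_expr_order prim_v).
by rewrite v0 expr0n gtn_eqF ?(prim_order_gt0 prim_v) // => /eqP; rewrite eq_sym oner_eq0.
Qed.

Lemma lead_coef_rot (p : {poly F}) :
  lead_coef (rot p) = lead_coef p * v ^+ (size p).-1.
Proof.
have size_vX : size (v *: 'X : {poly F}) = 2.
  by rewrite size_scale ?prim_root_neq0 // size_polyX.
by rewrite lead_coef_comp ?size_vX // lead_coefZ lead_coefX mulr1.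
Qed.

Lemma size_eq_of_rot_comm (f p : {poly F}) :
  (size f <= n)%N -> (size p <= n)%N -> f != 0 -> p != 0 ->
  f * rot p = rot f * p -> size f = size p.
Proof.
move=> sf sp f_neq0 p_neq0 /(congr1 lead_coef); rewrite !lead_coefM !lead_coef_rot => E.
have : v ^+ (size p).-1 = v ^+ (size f).-1.
  apply: (mulfI (x := lead_coef f * lead_coef p)); first by rewrite mulf_neq0 ?lead_coef_eq0.
  by rewrite -mulrA E mulrAC.
have sf_gt0 : (0 < size f)%N by rewrite size_poly_gt0.
have sp_gt0 : (0 < size p)%N by rewrite size_poly_gt0.
by move/eqP; rewrite (eq_prim_root_expr prim_v) !modn_small; lia.
Qed.

Lemma rot_comm_scale (p q : {poly F}) :
  (size p <= n)%N -> (size q <= n)%N -> p != 0 ->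
  q * rot p = rot q * p -> q = (lead_coef q / lead_coef p) *: p.
Proof.
move=> sp sq p_neq0 comm.
have [-> | q_neq0] := eqVneq q 0; first by rewrite lead_coef0 mul0r scale0r.
set c := _ / _.
have size_q := size_eq_of_rot_comm sq sp q_neq0 p_neq0 comm.
(* q - c p obeys the same identity but has no term of degree (size p).-1. *)
apply: subr0_eq; apply/eqP/negPn/negP => g_neq0.
have g_comm : (q - c *: p) * rot p = rot (q - c *: p) * p.
  by rewrite comp_polyB comp_polyZ !mulrBl comm -!scalerAl [p * _]mulrC.
have size_g : (size (q - c *: p)%R <= n)%N.
  by rewrite (leq_trans (size_polyD _ _)) // size_polyN geq_max sq (leq_trans (size_scale_leq _ _)).
have size_g_eq := size_eq_of_rot_comm size_g sp g_neq0 p_neq0 g_comm.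
move: g_neq0; rewrite -lead_coef_eq0 lead_coefE size_g_eq coefB coefZ.
by rewrite -lead_coefE -size_q -lead_coefE /c divfK ?lead_coef_eq0 // subrr eqxx.
Qed.

End Rotation.

Lemma size_mul_subr_leq (R : nzRingType) d (f g h k : {poly R}) :
  (size f <= d)%N -> (size g <= d)%N -> (size h <= d)%N -> (size k <= d)%N ->
  (size (f * g - h * k)%R <= 2 * d - 1)%N.
Proof.
move=> sf sg sh sk; rewrite (leq_trans (size_polyD _ _)) // size_polyN geq_max.
have := size_polyMleq f g; have := size_polyMleq h k; lia.
Qed.

Section ConjC.
Variable C : numClosedFieldType.
Implicit Types (z : C) (p q : {poly C}).

Lemma polarizationC (a b a' b' : C) :
  `|a| = `|a'| -> `|b| = `|b'| -> `|a - b| = `|a' - b'| ->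
  `|a - 'i * b| = `|a' - 'i * b'| -> a * b^* = a' * b'^*.
Proof.
move=> Ea Eb Eab Eaib.
have polar x y : 2%:R * 'i * (x * y^*) =
    'i * (`|x| ^+ 2 + `|y| ^+ 2 - `|x - y| ^+ 2)
    + (`|x - 'i * y| ^+ 2 - `|x| ^+ 2 + 'i ^+ 2 * `|y| ^+ 2).
  by rewrite !normCK !rmorphB !rmorphM /= conjCi; ring.
apply: (mulfI (x := 2%:R * 'i)); first by rewrite mulf_neq0 ?pnatr_eq0 ?neq0Ci.
by rewrite !polar Ea Eb Eab Eaib.
Qed.

Lemma cross_eq_of_mul_conjC (a b a' b' : C) :
  `|a| = `|a'| -> `|b| = `|b'| -> a * b^* = a' * b'^* -> a' * b = b' * a.
Proof.
move=> Ea Eb E; move/(congr1 Num.conj): (E); rewrite !rmorphM /= !conjCK => E'.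
apply/eqP; rewrite -subr_eq0 -mul_conjC_eq0 rmorphB !rmorphM /=.
have -> : (a' * b - b' * a) * (a'^* * b^* - b'^* * a^*) =
    `|a'| ^+ 2 * `|b| ^+ 2 - (a' * b'^*) * (a^* * b) - (a'^* * b') * (a * b^*)
    + `|b'| ^+ 2 * `|a| ^+ 2 by rewrite !normCK; ring.
by rewrite -Ea -Eb -E -E' !normCK; apply/eqP; ring.
Qed.

Definition conjC_rev_poly d p := \poly_(k < d) (p`_(d.-1 - k))^*.

Lemma horner_conjC_rev d p z : (size p <= d)%N -> `|z| = 1 ->
  (conjC_rev_poly d p).[z] = z ^+ d.-1 * (p.[z])^*.
Proof.
move=> sp z1; have zz : z * z^* = 1 by rewrite -normCK z1 expr1n.
rewrite horner_poly (horner_coef_wide _ sp) rmorph_sum mulr_sumr.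
rewrite (reindex_inj rev_ord_inj) /=; apply: eq_bigr => i _.
have lt_id := ltn_ord i; rewrite rmorphM rmorphXn /=.
have -> : (d - i.+1 = d.-1 - i)%N by lia.
have -> : (d.-1 - (d.-1 - i) = i)%N by lia.
have -> : z ^+ d.-1 = z ^+ (d.-1 - i) * z ^+ i by rewrite -exprD; congr (_ ^+ _); lia.
by rewrite -[LHS]mulr1 -(expr1n _ i) -zz exprMn; ring.
Qed.

Section CircleData.
Variables (d : nat) (p q : {poly C}) (rs : seq C).
Hypotheses (sp : (size p <= d)%N) (sq : (size q <= d)%N).
Hypotheses (rs_uniq : uniq rs) (rs_size : (2 * d - 1 <= size rs)%N).
Hypothesis rs_circle : {in rs, forall z, `|z| = 1}.

Lemma norm_horner_eq_on_circle :
  {in rs, forall z, `|p.[z]| = `|q.[z]|} ->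
  forall z, `|z| = 1 -> `|p.[z]| = `|q.[z]|.
Proof.
move=> pq_rs; pose P := p * conjC_rev_poly d p - q * conjC_rev_poly d q.
have horner_P z : `|z| = 1 -> P.[z] = z ^+ d.-1 * (`|p.[z]| ^+ 2 - `|q.[z]| ^+ 2).
  by move=> z1; rewrite hornerD hornerN !hornerM !horner_conjC_rev // !normCK; ring.
have P_eq0 : P = 0.
  apply: (poly_eq0_of_roots rs_uniq).
    by rewrite (leq_trans _ rs_size) // size_mul_subr_leq // size_poly.
  by apply/allP => z z_rs; rewrite /root (horner_P z (rs_circle z_rs)) pq_rs // subrr mulr0.
move=> z z1; have := horner_P z z1; rewrite P_eq0 horner0 => /esym/eqP.
rewrite mulf_eq0 expf_eq0 -normr_eq0 z1 oner_eq0 andbF /= subr_eq0.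
by rewrite eqrXn2 // => /eqP.
Qed.

Variable v : C.
Hypothesis v_circle : `|v| = 1.

Lemma rot_comm_of_norms :
  (forall z : C, `|z| = 1 -> `|p.[z]| = `|q.[z]|) ->
  {in rs, forall z, `|p.[z] - p.[z * v]| = `|q.[z] - q.[z * v]|} ->
  {in rs, forall z, `|p.[z] - 'i * p.[z * v]| = `|q.[z] - 'i * q.[z * v]|} ->
  q * (p \Po (v *: 'X)) = (q \Po (v *: 'X)) * p.
Proof.
move=> pq_circle pq_diff pq_idiff.
have size_vX : size (v *: 'X : {poly C}) = 2.
  by rewrite size_scale ?size_polyX // -normr_eq0 v_circle oner_eq0.
apply: subr0_eq; apply: (poly_eq0_of_roots rs_uniq).
  by rewrite (leq_trans _ rs_size) // size_mul_subr_leq ?size_comp_poly2.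
apply/allP => z z_rs; rewrite /root hornerD hornerN !hornerM !horner_comp.
rewrite hornerZ hornerX [v * z]mulrC subr_eq0; apply/eqP.
have zv_circle : `|z * v| = 1 by rewrite normrM rs_circle // v_circle mulr1.
have pq_z := pq_circle _ (rs_circle z_rs); have pq_zv := pq_circle _ zv_circle.
apply: (cross_eq_of_mul_conjC pq_z pq_zv).
exact: polarizationC pq_z pq_zv (pq_diff _ z_rs) (pq_idiff _ z_rs).
Qed.

End CircleData.

End ConjC.

Section Expi.
Variable R : realType.

Lemma expiD (t s : R) : expi (t + s) = expi t * expi s.
Proof. by rewrite /expi cosD sinD; simpc; congr (_ +i* _)%C; ring. Qed.

Lemma expiMn (t : R) n : expi t ^+ n = expi (t *+ n).
Proof.
elim: n => [|n IHn]; first by rewrite /expi mulr0n cos0 sin0.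
by rewrite exprS IHn mulrS expiD.
Qed.

Lemma expi_neq1 (t : R) : 0 < t < pi *+ 2 -> expi t != 1.
Proof.
move=> /andP[t_gt0 t_lt2pi]; apply/negP => /eqP[cos_t sin_t].
have pi_gt0 := pi_gt0 R.
case: (ltgtP t pi) => [lt_tpi | lt_pit | eq_tpi].
- by move: (sin_gt0_pi (x := t)); rewrite sin_t ltxx t_gt0 lt_tpi => /(_ isT).
- have : 0 < sin (t - pi) by apply: sin_gt0_pi; apply/andP; split; lra.
  by rewrite sinB cospi sinpi sin_t; lra.
- by move: cos_t; rewrite eq_tpi cospi; lra.
Qed.

Lemma prim_root_expi n : (0 < n)%N -> n.-primitive_root (expi ((2 * pi) / n%:R) : R[i]).
Proof.
move=> n_gt0; have pi_gt0 := pi_gt0 R.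
set t := (2 * pi) / n%:R.
have t_gt0 : 0 < t by rewrite divr_gt0 ?ltr0n //; lra.
have tn : t *+ n = pi *+ 2 by rewrite -mulr_natr divfK ?mulr_natl // pnatr_eq0 -lt0n.
apply: prim_root_of_order n_gt0 _ _.
  by rewrite expiMn tn /expi cos2pi sin2pi.
move=> k /andP[k_gt0 lt_kn]; rewrite expiMn; apply: expi_neq1.
by rewrite pmulrn_lgt0 // t_gt0 -tn ltr_pMn2l.
Qed.

End Expi.

Section Measurements.
Variable R : realType.

Lemma omega_prim_root d : (0 < d)%N -> (2 * d - 1).-primitive_root (omega R d).
Proof. by move=> d_gt0; apply: prim_root_expi; lia. Qed.

Lemma nu_prim_root d : (0 < d)%N -> d.-primitive_root (nu R d).
Proof. exact: prim_root_expi. Qed.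

Definition sample_points d : seq R[i] := [seq omega R d ^+ j | j <- iota 1 (2 * d - 1)].

Lemma Ameas_sample d (p : {poly R[i]}) j : (0 < d)%N -> (1 <= j <= 2 * d - 1)%N ->
  let z := omega R d ^+ j in
  [/\ Ameas d p j = `|p.[z]| ^+ 2,
      Ameas d p (j + (2 * d - 1)) = `|p.[z] - p.[z * nu R d]| ^+ 2 &
      Ameas d p (j + (2 * d - 1) * 2) = `|p.[z] - 'i * p.[z * nu R d]| ^+ 2].
Proof.
move=> d_gt0 j_range; have w_N := prim_expr_order (omega_prim_root d_gt0).
rewrite /Ameas /=; split.
- by rewrite ifT //; lia.
- by rewrite ifF ?ifT ?exprD ?w_N ?mulr1 //; lia.
- by rewrite !ifF ?exprD ?exprM ?w_N ?expr1n ?mulr1 //; lia.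
Qed.

Lemma Ameas_eq_sample_norms d (p q : {poly R[i]}) : (0 < d)%N ->
  (forall j, (1 <= j <= 6 * d - 3)%N -> Ameas d p j = Ameas d q j) ->
  let v := nu R d in
  [/\ {in sample_points d, forall z, `|p.[z]| = `|q.[z]|},
      {in sample_points d, forall z, `|p.[z] - p.[z * v]| = `|q.[z] - q.[z * v]|} &
      {in sample_points d,
        forall z, `|p.[z] - 'i * p.[z * v]| = `|q.[z] - 'i * q.[z * v]|}].
Proof.
move=> d_gt0 Apq.
have norm_eq (a b : R[i]) : `|a| ^+ 2 = `|b| ^+ 2 -> `|a| = `|b|.
  by move/eqP; rewrite eqrXn2 // => /eqP.
split=> z /mapP[j]; rewrite mem_iota => j_range ->.
all: have j_range' : (1 <= j <= 2 * d - 1)%N by lia.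
all: have [Ep1 Ep2 Ep3] := Ameas_sample p d_gt0 j_range'.
all: have [Eq1 Eq2 Eq3] := Ameas_sample q d_gt0 j_range'.
all: apply: norm_eq; first [rewrite -Ep1 -Eq1 | rewrite -Ep2 -Eq2 | rewrite -Ep3 -Eq3].
all: by apply: Apq; lia.
Qed.

End Measurements.

Theorem mainTheorem6 (R : realType) (d : nat) (p q : {poly R[i]}) :
  (1 <= d)%N -> Pd d p -> Pd d q ->
  (forall j : nat, (1 <= j <= 6 * d - 3)%N -> Ameas d p j = Ameas d q j) ->
  exists c : R[i], `|c| = 1 /\ q = c *: p.
Proof.
move=> d_gt0 sp sq Apq; rewrite /Pd in sp sq.
have w_prim := omega_prim_root R d_gt0; have v_prim := nu_prim_root R d_gt0.
have rs_uniq : uniq (sample_points R d) := uniq_prim_root_powers 1 w_prim.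
have rs_size : (2 * d - 1 <= size (sample_points R d))%N by rewrite size_map size_iota.
have rs_circle : {in sample_points R d, forall z, `|z| = 1}.
  move=> _ /mapP[j _ ->]; apply: (@norm_unity_root _ (2 * d - 1)); first lia.
  by rewrite -exprM mulnC exprM (prim_expr_order w_prim) expr1n.
have v_circle : `|nu R d| = 1 := norm_unity_root d_gt0 (prim_expr_order v_prim).
have [pq_rs pq_diff pq_idiff] := Ameas_eq_sample_norms d_gt0 Apq.
have pq_circle := norm_horner_eq_on_circle sp sq rs_uniq rs_size rs_circle pq_rs.
have comm := rot_comm_of_norms sp sq rs_uniq rs_size rs_circle v_circle
  pq_circle pq_diff pq_idiff.
have rs_ge_d : (d <= size (sample_points R d))%N by lia.
have [p0 | p_neq0] := eqVneq p 0.
  exists 1; rewrite normr1 scale1r p0; split=> //.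
  apply: (poly_eq0_of_roots rs_uniq (leq_trans sq rs_ge_d)); apply/allP => z z_rs.
  by rewrite /root -normr_eq0 -pq_rs // p0 horner0 normr0.
have qE := rot_comm_scale v_prim sp sq p_neq0 comm.
exists (lead_coef q / lead_coef p); split=> //.
apply: (norm_eq1_of_scale rs_uniq (leq_trans sp rs_ge_d) p_neq0) => z z_rs.
by rewrite -qE pq_rs.
Qed.
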